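(* Let $G=(V,E)$ be a finite connected graph with positive edge weights $(\theta_e)$, let $T(G)$ be its universal cover with covering map $\pi:T(G)\to G$ (edge weights inherited through $\pi$), and fix $z>0$. Let $\mathbf{y}(z)\in(0,\infty)^{\vec{E}}$ be the unique solution of $\mathbf{y}(z)=z\mathcal{R}_G(\mathbf{y}(z))$ and $\tilde{\mathbf{y}}(z)\in(0,\infty)^{\vec{E}(T(G))}$ the unique solution of $\tilde{\mathbf{y}}(z)=z\mathcal{R}_{T(G)}(\tilde{\mathbf{y}}(z))$. Then $\tilde{y}_{\vec{e}}(z)=y_{\pi(\vec{e})}(z)$ for every directed edge $\vec{e}$ of $T(G)$.
   Context: For a weighted graph $H$ with directed edge set $\vec{E}$ (two orientations $u\to v$, $v\to u$ per edge $uv$), the map $\mathcal{R}_H:(0,\infty)^{\vec{E}}\to(0,\infty)^{\vec{E}}$ is $\mathcal{R}_H(\mathbf{a})_{u\to v}=\big(1+\sum_{w\in\partial u\setminus v}\theta_{wu}a_{w\to u}\big)^{-1}$, where $\partial u\setminus v$ is the set of neighbours of $u$ other than $v$ and empty sums are $0$; $z\mathcal{R}_H$ multiplies each component by $z$. The universal cover $T(G)$ is the tree whose vertices are the finite non-backtracking walks in $G$ from a fixed vertex, two walks adjacent if one is a one-step extension of the other; $\pi$ maps a walk to its endpoint (and edges/directed edges accordingly). Existence and uniqueness of both fixed points are given. *)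

From mathcomp Require Import all_boot all_order all_algebra.
Set Implicit Arguments. Unset Strict Implicit. Unset Printing Implicit Defensive.
Import Order.TTheory GRing.Theory Num.Theory.
Local Open Scope ring_scope.

(* A finite weighted graph: vertex type V : finType, a symmetric irreflexive
   adjacency relation adj, and edge weights theta : V -> V -> R (only the values
   on edges matter).  Directed edges of G are the pairs (u,v) with adj u v.
   Vectors indexed by directed edges are modelled as functions V -> V -> R
   (values off the directed edges are irrelevant). *)

Section Defs.
Variable R : realFieldType.
Variable V : finType.
Variable adj : rel V.
Variable theta : V -> V -> R.

Definition RG (a : V -> V -> R) (u v : V) : R :=
  (1 + \sum_(w | adj u w && (w != v)) theta w u * a w u)^-1.

Variable o : V.

Fixpoint nonbacktracking (s : seq V) : bool :=
  match s with
  | a :: ((b :: c :: _) as t) => (a != c) && nonbacktracking t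
  | _ => true
  end.

(* vertices of T(G): finite non-backtracking walks in G starting at o *)
Definition is_walk (w : seq V) : bool :=
  match w with
  | x :: p => (x == o) && path adj x p && nonbacktracking w
  | [::] => false
  end.

Definition ext1 (w w' : seq V) : bool :=
  (size w' == (size w).+1) && (take (size w) w' == w).

Definition tadj (w w' : seq V) : bool := ext1 w w' || ext1 w' w.

Definition tdedge (w w' : seq V) : bool := [&& is_walk w, is_walk w' & tadj w w'].

Definition piV (w : seq V) : V := last o w.

Definition thetaT (w w' : seq V) : R := theta (piV w) (piV w').

(* a finite list containing every T(G)-neighbour of w: its parent and all
   one-step extensions (filtered below by the actual adjacency relation) *)
Definition tcand (w : seq V) : seq (seq V) :=
  undup (take (size w).-1 w :: [seq rcons w x | x <- enum V]).

Definition RT (a : seq V -> seq V -> R) (w w' : seq V) : R :=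
  (1 + \sum_(u <- tcand w | [&& is_walk u, tadj u w & u != w'])
          thetaT u w * a u w)^-1.
End Defs.

From mathcomp Require Import all_boot all_order all_algebra.
Set Implicit Arguments. Unset Strict Implicit. Unset Printing Implicit Defensive.
Import Order.TTheory GRing.Theory Num.Theory.

(* The covering map is a local isomorphism: on the neighbours of a walk [w] in
   T(G), namely its parent and its non-backtracking one-step extensions, [piV]
   is a bijection onto the neighbours of [piV w] in G.  Hence the sum defining
   R_{T(G)} at [w -> w'] is a reindexing of the sum defining R_G at
   [piV w -> piV w'], so the lift [y \o piV] of the fixed point of z R_G is a
   positive fixed point of z R_{T(G)}; uniqueness identifies it with [yt]. *)

Lemma nonbacktracking_cons (V : finType) (h : V) s :
  nonbacktracking (h :: s) =
  nonbacktracking s && (if s is _ :: c :: _ then h != c else true).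
Proof. by case: s => [|x [|y s]] //=; rewrite andbC. Qed.

Lemma nonbacktracking_rcons3 (V : finType) (s : seq V) a b c :
  nonbacktracking (rcons (rcons (rcons s a) b) c) =
  nonbacktracking (rcons (rcons s a) b) && (a != c).
Proof.
elim: s => [|h t IH]; first by rewrite /= andbT.
rewrite !rcons_cons !nonbacktracking_cons IH.
by case: t {IH} => [|x [|y t]] /=; [rewrite andbC | rewrite andbAC ..].
Qed.

Lemma nonbacktracking_rcons (V : finType) (s : seq V) a :
  nonbacktracking (rcons s a) -> nonbacktracking s.
Proof.
case/lastP: s => [|s b] //; case/lastP: s => [|s c] //.
by rewrite nonbacktracking_rcons3 => /andP[].
Qed.

Lemma take_rcons_parent (T : Type) (w : seq T) x :
  take (size (rcons w x)).-1 (rcons w x) = w.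
Proof. by rewrite size_rcons -cats1 take_size_cat. Qed.

Section CoveringMap.
Variables (V : finType) (adj : rel V) (o : V).
Hypothesis adj_sym : symmetric adj.
Local Notation walk := (is_walk adj o).
Local Notation piV := (piV o).
Local Notation parent w := (take (size w).-1 w).
Local Notation tree_nbr w u := (walk u && tadj u w).
Implicit Types (s w u : seq V) (a b c l x : V).

Lemma walk_rcons w c : w != [::] ->
  walk (rcons w c) = [&& walk w, adj (last o w) c & nonbacktracking (rcons w c)].
Proof.
case: w => [|x p] // _; rewrite rcons_cons /is_walk -rcons_cons rcons_path.
case N: (nonbacktracking _); last by rewrite !andbF.
by rewrite (nonbacktracking_rcons N) !andbT andbA.
Qed.

Lemma walk_rcons3 s a b c :
  walk (rcons (rcons (rcons s a) b) c) =
  [&& walk (rcons (rcons s a) b), adj b c & a != c].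
Proof.
rewrite walk_rcons ?last_rcons; last by case: s.
rewrite nonbacktracking_rcons3 walk_rcons; last by case: s.
by case: (nonbacktracking _); rewrite /= ?andbF.
Qed.

Lemma walk_root_or_rcons2 w : walk w ->
  w = [:: o] \/ exists s a l, w = rcons (rcons s a) l.
Proof.
case/lastP: w => [|w1 l] //; case/lastP: w1 => [/andP[/andP[/eqP-> _] _]|s a _]; first by left.
by right; exists s, a, l.
Qed.

Lemma ext1_rcons w x : ext1 w (rcons w x).
Proof. by rewrite /ext1 size_rcons -cats1 take_size_cat // !eqxx. Qed.

Lemma tree_nbr_cases w u : walk u -> tadj u w ->
  (u = parent w /\ 1 < size w) \/ (exists x, u = rcons w x).
Proof.
move=> Wu /orP[]/andP[/eqP Hs /eqP Ht].
  by left; rewrite Hs /= Ht; split=> //; case: u Wu {Hs Ht}.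
right; move: Ht; rewrite -{2}(cat_take_drop (size w) u) => ->.
have : size (drop (size w) u) = 1 by rewrite size_drop Hs subSnn.
by case: (drop _ u) => [|x [|]] // _; exists x; rewrite cats1.
Qed.

Lemma adj_piV_tree_nbr w u : walk w -> tree_nbr w u -> adj (piV w) (piV u).
Proof.
move=> Ww /andP[Wu Tu]; case: (tree_nbr_cases Wu Tu) => [[-> Hw]|[x Eu]].
  case: (walk_root_or_rcons2 Ww) => [Ew|[s [a [l Ew]]]]; first by rewrite Ew in Hw.
  move: Ww; rewrite Ew take_rcons_parent walk_rcons; last by case: (s).
  by rewrite /piV !last_rcons adj_sym => /and3P[].
move: Wu; rewrite Eu walk_rcons; last by case: w Ww {Tu Eu}.
by rewrite /piV last_rcons => /and3P[].
Qed.

Lemma piV_parent_neq_child w x : walk w -> 1 < size w -> walk (rcons w x) ->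
  piV (parent w) != x.
Proof.
move=> Ww Hw; case: (walk_root_or_rcons2 Ww) => [Ew|[s [a [l ->]]]].
  by rewrite Ew in Hw.
by rewrite take_rcons_parent walk_rcons3 /piV last_rcons => /and3P[].
Qed.

Lemma piV_inj_tree_nbr w u1 u2 : walk w -> tree_nbr w u1 -> tree_nbr w u2 ->
  piV u1 = piV u2 -> u1 = u2.
Proof.
move=> Ww /andP[W1 T1] /andP[W2 T2] E.
case: (tree_nbr_cases W1 T1) => [[E1 H1]|[x1 E1]];
case: (tree_nbr_cases W2 T2) => [[E2 H2]|[x2 E2]]; subst u1 u2 => //.
- by move: (piV_parent_neq_child Ww H1 W2); rewrite E /piV last_rcons eqxx.
- by move: (piV_parent_neq_child Ww H2 W1); rewrite -E /piV last_rcons eqxx.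
- by move: E; rewrite /piV !last_rcons => ->.
Qed.

Lemma piV_onto_tree_nbr w x : walk w -> adj (piV w) x ->
  exists u, [/\ tree_nbr w u, piV u = x & u \in tcand w].
Proof.
move=> Ww Hx.
have child : walk (rcons w x) -> exists u, [/\ tree_nbr w u, piV u = x & u \in tcand w].
  move=> Wc; exists (rcons w x); split.
  - by rewrite Wc /tadj ext1_rcons orbT.
  - by rewrite /piV last_rcons.
  - by rewrite /tcand mem_undup inE (map_f (rcons w)) ?mem_enum ?orbT.
case: (walk_root_or_rcons2 Ww) => [Ew|[s [a [l Ew]]]].
  by apply: child; move: Hx; rewrite Ew /is_walk /piV /= eqxx !andbT.
have [Exa|Nxa] := eqVneq x a.
  exists (rcons s a); split.
  - move: Ww; rewrite Ew walk_rcons; last by case: (s).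
    by case/and3P=> -> _ _; rewrite /tadj ext1_rcons.
  - by rewrite /piV last_rcons.
  - by rewrite /tcand mem_undup inE Ew take_rcons_parent eqxx.
apply: child; rewrite Ew walk_rcons3 -Ew Ww eq_sym Nxa andbT.
by move: Hx; rewrite /piV Ew last_rcons.
Qed.

Lemma adj_piV_tdedge w w' : tdedge adj o w w' -> adj (piV w) (piV w').
Proof.
by case/and3P=> Ww Ww' Tww'; apply: adj_piV_tree_nbr; rewrite // Ww' /tadj orbC.
Qed.

Local Open Scope ring_scope.

Lemma big_tree_nbr_piV (M : nmodType) (F : V -> M) w w' :
  tdedge adj o w w' ->
  \sum_(u <- tcand w | [&& walk u, tadj u w & u != w']) F (piV u)
  = \sum_(x | adj (piV w) x && (x != piV w')) F x.
Proof.
case/and3P=> Ww Ww' Tww'; have Nw' : tree_nbr w w' by rewrite Ww' /tadj orbC.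
rewrite -big_filter -[RHS]big_filter.
set us := [seq u <- tcand w | _].
rewrite (perm_big [seq piV u | u <- us]) ?big_map //.
have us_nbr u : u \in us -> tree_nbr w u /\ u != w'.
  by rewrite mem_filter => /andP[/and3P[-> -> ->]].
apply: uniq_perm.
- by rewrite filter_uniq // index_enum_uniq.
- rewrite map_inj_in_uniq ?filter_uniq ?undup_uniq // => u1 u2 U1 U2.
  have [N1 _] := us_nbr _ U1; have [N2 _] := us_nbr _ U2.
  exact: piV_inj_tree_nbr Ww N1 N2.
move=> x; rewrite mem_filter mem_index_enum andbT; apply/idP/mapP.
  case/andP=> Hx; case: (piV_onto_tree_nbr Ww Hx) => u [Nu <- Iu] Nx.
  exists u => //; rewrite mem_filter Iu andbT; case/andP: Nu => -> -> /=.
  by apply: contraNneq Nx => ->.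
case=> u Uu ->; have [Nu Hu] := us_nbr _ Uu; rewrite adj_piV_tree_nbr //=.
by apply: contra Hu => /eqP /(piV_inj_tree_nbr Ww Nu Nw') ->.
Qed.

End CoveringMap.

Local Open Scope ring_scope.

Definition lift_dedge (R : Type) (V : finType) (o : V) (y : V -> V -> R)
    (w w' : seq V) : R :=
  y (piV o w) (piV o w').

Lemma RT_lift_dedge (R : realFieldType) (V : finType) (adj : rel V)
    (theta : V -> V -> R) (o : V) (y : V -> V -> R) w w' :
  symmetric adj -> tdedge adj o w w' ->
  RT adj theta o (lift_dedge o y) w w' = RG adj theta y (piV o w) (piV o w').
Proof.
move=> adj_sym ww'; rewrite /RT /RG /thetaT /lift_dedge.
by rewrite (big_tree_nbr_piV adj_sym (fun x => theta x (piV o w) * y x (piV o w))).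
Qed.

Theorem proposition4p11 (R : realFieldType) (V : finType) (adj : rel V)
    (theta : V -> V -> R) (o : V) (z : R)
    (adj_sym : symmetric adj) (adj_irr : irreflexive adj)
    (theta_sym : forall u v, theta u v = theta v u)
    (theta_pos : forall u v, adj u v -> 0 < theta u v)
    (connected : forall u v, connect adj u v)
    (z_pos : 0 < z)
    (y : V -> V -> R)
    (y_fix : forall u v, adj u v -> 0 < y u v /\ y u v = z * RG adj theta y u v)
    (y_uniq : forall y' : V -> V -> R,
        (forall u v, adj u v -> 0 < y' u v /\ y' u v = z * RG adj theta y' u v) ->
        forall u v, adj u v -> y' u v = y u v)
    (yt : seq V -> seq V -> R)
    (yt_fix : forall w w', tdedge adj o w w' ->
        0 < yt w w' /\ yt w w' = z * RT adj theta o yt w w')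
    (yt_uniq : forall yt' : seq V -> seq V -> R,
        (forall w w', tdedge adj o w w' ->
           0 < yt' w w' /\ yt' w w' = z * RT adj theta o yt' w w') ->
        forall w w', tdedge adj o w w' -> yt' w w' = yt w w') :
  forall w w', tdedge adj o w w' -> yt w w' = y (piV o w) (piV o w').
Proof.
move=> w w' ww'; symmetry; apply: (yt_uniq (lift_dedge o y)) => // a b ab.
rewrite RT_lift_dedge //; exact: y_fix (adj_piV_tdedge adj_sym ab).
Qed.
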